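(* Let $A\neq 1$ and $B\neq 0$ be real constants and let $(x_n)_{n\ge0}$ be the solution of $$x_{n+10}=\frac{x_n}{A+B\,x_nx_{n+2}x_{n+4}x_{n+6}x_{n+8}},\qquad n\ge 0,$$ with initial conditions $x_0,\dots,x_9$. Suppose the initial conditions satisfy $x_0x_1x_2x_3x_4=\frac{1-A}{B}$, $x_i=x_{i+5}$ for $i=0,\dots,4$, and $x_i\neq x_{i+2}$. Then the solution is periodic with period $5$. *)

From Stdlib Require Import Reals Lra Lia.

(* Write P := x_0 x_1 x_2 x_3 x_4 = (1 - A)/B.  As long as x is 5-periodic on the
   window x_n, ..., x_(n+9), the product x_n x_(n+2) x_(n+4) x_(n+6) x_(n+8) runs
   over one full period, so it equals P and the denominator of the recurrence is
   A + B P = 1; hence x_(n+10) = x_n = x_(n+5) and the window slides by one.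
   A period p < 5 would give, together with 5, the period 1 or 2, contradicting
   x_0 <> x_2. *)
From Stdlib Require Import Reals Lia Classical.
Open Scope R_scope.

Section PeriodicSequences.

Context {T : Type} (x : nat -> T).

Definition periodic (p : nat) : Prop := forall n, x (n + p)%nat = x n.

Lemma periodic_mul p k : periodic p -> periodic (k * p).
Proof.
  intros Hp n; induction k as [|k IH]; simpl.
  - f_equal; lia.
  - replace (n + (p + k * p))%nat with (n + k * p + p)%nat by lia.
    rewrite Hp; exact IH.
Qed.

Lemma periodic_sub p q : (p <= q)%nat -> periodic p -> periodic q -> periodic (q - p).
Proof.
  intros Hpq Hp Hq n.
  rewrite <- Hp; replace (n + (q - p) + p)%nat with (n + q)%nat by lia.
  apply Hq.
Qed.

Lemma periodic5_not_periodic p :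
  x 2%nat <> x 0%nat -> periodic 5 -> (0 < p < 5)%nat -> ~ periodic p.
Proof.
  intros H20 H5 Hp Hper; apply H20.
  assert (H12 : periodic 1 \/ periodic 2).
  { destruct p as [|[|[|[|[|p]]]]]; try lia; auto.
    - right; exact (periodic_sub 3 5 ltac:(lia) Hper H5).
    - left; exact (periodic_sub 4 5 ltac:(lia) Hper H5). }
  destruct H12 as [H1|H2].
  - exact (periodic_mul 1 2 H1 0%nat).
  - exact (H2 0%nat).
Qed.

End PeriodicSequences.

Section Recurrence.

Variables (A B : R) (x : nat -> R).
Hypothesis hB : B <> 0.
Hypothesis hrec : forall n : nat,
  x (n + 10)%nat =
    x n / (A + B * x n * x (n + 2)%nat * x (n + 4)%nat * x (n + 6)%nat * x (n + 8)%nat).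

Definition period5_window (n : nat) : Prop :=
  (forall i, (i <= 4)%nat -> x (n + i + 5)%nat = x (n + i)%nat) /\
  x n * x (n + 1)%nat * x (n + 2)%nat * x (n + 3)%nat * x (n + 4)%nat = (1 - A) / B.

Lemma period5_window_shift n i :
  period5_window n -> (i <= 4)%nat -> x (n + (i + 5))%nat = x (n + i)%nat.
Proof. intros [Hw _] Hi; rewrite Nat.add_assoc; exact (Hw i Hi). Qed.

Lemma period5_window_add5 n : period5_window n -> x (n + 5)%nat = x n.
Proof.
  intros Hw; rewrite <- (Nat.add_0_r n) at 2.
  exact (period5_window_shift n 0 Hw ltac:(lia)).
Qed.

Lemma period5_window_add10 n : period5_window n -> x (n + 10)%nat = x n.
Proof.
  intros Hw.
  assert (Hden : A + B * x n * x (n + 2)%nat * x (n + 4)%nat * x (n + 6)%nat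
                   * x (n + 8)%nat = 1).
  { assert (H6 : x (n + 6)%nat = x (n + 1)%nat) by exact (period5_window_shift n 1 Hw ltac:(lia)).
    assert (H8 : x (n + 8)%nat = x (n + 3)%nat) by exact (period5_window_shift n 3 Hw ltac:(lia)).
    rewrite H6, H8.
    destruct Hw as [_ Hprod].
    replace (A + B * x n * x (n + 2)%nat * x (n + 4)%nat * x (n + 1)%nat
               * x (n + 3)%nat)
      with (A + B * (x n * x (n + 1)%nat * x (n + 2)%nat * x (n + 3)%nat
               * x (n + 4)%nat)) by ring.
    rewrite Hprod; field; exact hB. }
  rewrite hrec, Hden; field.
Qed.

Lemma period5_window_S n : period5_window n -> period5_window (S n).
Proof.
  intros Hw.
  pose proof (period5_window_add5 n Hw) as H5.
  split.
  - intros i Hi.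
    destruct (Nat.eq_dec i 4) as [->|Hi4].
    + replace (S n + 4 + 5)%nat with (n + 10)%nat by lia.
      replace (S n + 4)%nat with (n + 5)%nat by lia.
      rewrite H5; exact (period5_window_add10 n Hw).
    + replace (S n + i + 5)%nat with (n + (S i + 5))%nat by lia.
      replace (S n + i)%nat with (n + S i)%nat by lia.
      apply (period5_window_shift n (S i) Hw); lia.
  - destruct Hw as [_ Hprod].
    replace (S n) with (n + 1)%nat by lia.
    replace (n + 1 + 1)%nat with (n + 2)%nat by lia.
    replace (n + 1 + 2)%nat with (n + 3)%nat by lia.
    replace (n + 1 + 3)%nat with (n + 4)%nat by lia.
    replace (n + 1 + 4)%nat with (n + 5)%nat by lia.
    rewrite H5, <- Hprod; ring.
Qed.

Lemma period5_window_periodic : period5_window 0 -> periodic x 5.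
Proof.
  intros H0 n.
  assert (Hn : period5_window n).
  { induction n as [|n IH]; [exact H0 | exact (period5_window_S n IH)]. }
  exact (period5_window_add5 n Hn).
Qed.

End Recurrence.

Theorem theorem3 (A B : R) (x : nat -> R)
  (hA : A <> 1) (hB : B <> 0)
  (hrec : forall n : nat,
     x (n + 10)%nat =
       x n / (A + B * x n * x (n + 2)%nat * x (n + 4)%nat * x (n + 6)%nat * x (n + 8)%nat))
  (hprod : x 0%nat * x 1%nat * x 2%nat * x 3%nat * x 4%nat = (1 - A) / B)
  (hper : forall i : nat, (i <= 4)%nat -> x i = x (i + 5)%nat)
  (hne : forall i : nat, (i <= 4)%nat -> x i <> x (i + 2)%nat) :
  (forall n : nat, x (n + 5)%nat = x n) /\
  (forall p : nat, (0 < p < 5)%nat -> exists n : nat, x (n + p)%nat <> x n).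
Proof.
  assert (H5 : periodic x 5).
  { apply (period5_window_periodic A B x hB hrec).
    split; [|exact hprod].
    intros i Hi; symmetry; exact (hper i Hi). }
  split; [exact H5|].
  intros p Hp.
  apply not_all_ex_not.
  apply (periodic5_not_periodic x p); [|exact H5|exact Hp].
  intros H; exact (hne 0%nat ltac:(lia) (eq_sym H)).
Qed.
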